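(* Let $H$ be a graph, $r\ge\omega_0(H)$, and $n\ge1$. Let $x$ be a vertex in a part of $\mathrm{T}_r(n)$ of largest size and let $v$ be any vertex of $\mathrm{T}_r(n)$. Then the number of subgraphs of $\mathrm{T}_r(n)$ isomorphic to $H$ containing $v$ is at least the number containing $x$, and the latter equals $\mathcal{N}(H,\mathrm{T}_r(n))-\mathcal{N}(H,\mathrm{T}_r(n-1))$.
   Context: All graphs are finite and simple. $\mathcal{N}(H,G)$ is the number of (not necessarily induced) subgraphs of $G$ isomorphic to $H$. $\mathrm{T}_r(n)$ is the Turán graph: complete $r$-partite on $n$ vertices with part sizes $\lfloor n/r\rfloor$ or $\lceil n/r\rceil$ ($\mathrm{T}_r(0)$ is the empty graph). For a graph $J$, $\omega_0(J)$ is the least positive integer such that for every integer $r\ge\omega_0(J)$ and every $n\ge1$, every $n$-vertex $K_{r+1}$-free graph $G$ satisfies $\mathcal{N}(J,G)\le\mathcal{N}(J,\mathrm{T}_r(n))$ (it exists by a theorem of Morrison, Nir, Norin, Rzążewski and Wesolek). *)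

From mathcomp Require Import all_boot all_algebra.
Set Implicit Arguments. Unset Strict Implicit. Unset Printing Implicit Defensive.

Record sgraph := SGraph {
  vtx : finType;
  adj : rel vtx;
  adj_sym : symmetric adj;
  adj_irr : irreflexive adj }.

Definition subgraph_of (G : sgraph) (p : {set vtx G} * {set {set vtx G}}) : bool :=
  [forall e in p.2, [exists a : vtx G, exists b : vtx G,
     [&& a \in p.1, b \in p.1, @adj G a b & e == [set a; b]]]].

Definition iso_to (H G : sgraph) (p : {set vtx G} * {set {set vtx G}}) : bool :=
  [exists f : {ffun vtx H -> vtx G},
    [&& injectiveb f, (f @: setT) == p.1 &
        [forall u : vtx H, forall w : vtx H, @adj H u w == ([set f u; f w] \in p.2)]]].

Definition copies (H G : sgraph) : {set {set vtx G} * {set {set vtx G}}} :=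
  [set p | subgraph_of p && iso_to H p].

Definition Ncount (H G : sgraph) : nat := #|copies H G|.

Definition Ncount_at (H G : sgraph) (v : vtx G) : nat :=
  #|[set p in copies H G | v \in p.1]|.

Definition clique_free (k : nat) (G : sgraph) : bool :=
  ~~ [exists f : {ffun 'I_k -> vtx G},
        injectiveb f && [forall i, forall j, (i != j) ==> @adj G (f i) (f j)]].

(* Turán graph T_r(n): vertices 0..n-1, part of i is i mod r. *)
Definition turan_adj (r n : nat) : rel 'I_n := fun i j => (i %% r != j %% r).

Lemma turan_adj_sym (r n : nat) : symmetric (@turan_adj r n).
Proof. by move=> i j; rewrite /turan_adj eq_sym. Qed.

Lemma turan_adj_irr (r n : nat) : irreflexive (@turan_adj r n).
Proof. by move=> i; rewrite /turan_adj eqxx. Qed.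

Definition turan (r n : nat) : sgraph :=
  @SGraph (ordinal n) (@turan_adj r n) (@turan_adj_sym r n) (@turan_adj_irr r n).

Definition turan_part (r n : nat) (v : 'I_n) : {set 'I_n} :=
  [set u : 'I_n | u %% r == v %% r].

(* the defining property of omega_0 at threshold w *)
Definition turan_good (H : sgraph) (w : nat) : Prop :=
  forall r, w <= r -> forall n, 0 < n ->
  forall G : sgraph, #|vtx G| = n -> clique_free r.+1 G ->
    Ncount H G <= Ncount H (turan r n).

Definition is_omega0 (H : sgraph) (w : nat) : Prop :=
  [/\ 0 < w, turan_good H w &
      forall w', 0 < w' -> turan_good H w' -> w <= w'].

From mathcomp Require Import all_boot all_algebra all_fingroup.
Set Implicit Arguments. Unset Strict Implicit. Unset Printing Implicit Defensive.

(* Deleting a vertex v from a graph G splits the copies of H into those avoiding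
   v, which are the copies in G - v, and those through v:
   N(H,G) = N(H,G-v) + N_v(H,G).  For G = T_r(n) and x in a largest part,
   T_r(n) - x is isomorphic to T_r(n-1), which gives the formula for N_x.  For an
   arbitrary v, T_r(n) - v is a K_{r+1}-free graph on n-1 vertices, so
   r >= omega_0(H) bounds N(H, T_r(n) - v) by N(H, T_r(n-1)), whence N_v >= N_x. *)

Section InducedEmbedding.

Variables (H G G' : sgraph) (h : vtx G' -> vtx G).
Hypothesis h_inj : injective h.
Hypothesis h_adj : forall u w, adj (h u) (h w) = adj u w.

Definition copy_image (p : {set vtx G'} * {set {set vtx G'}}) :
    {set vtx G} * {set {set vtx G}} :=
  (h @: p.1, [set h @: e | e : {set vtx G'} in p.2]).

Lemma copy_image_inj : injective copy_image.
Proof.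
move=> [a1 a2] [b1 b2] [] /(imset_inj h_inj) -> /(imset_inj (imset_inj h_inj)) -> //.
Qed.

Lemma copy_image_copies p : p \in copies H G' -> copy_image p \in copies H G.
Proof.
case: p => p1 p2; rewrite /copies !inE /= => /andP [sub iso]; apply/andP; split.
  apply/forall_inP => _ /imsetP [e e_in ->].
  move/forall_inP: sub => /(_ e e_in) /existsP [a /existsP [b /and4P [a_in b_in ab /eqP ->]]].
  apply/existsP; exists (h a); apply/existsP; exists (h b).
  by rewrite /= !(mem_imset _ _ h_inj) h_adj a_in b_in ab imsetU !imset_set1 eqxx.
case/existsP: iso => f /and3P [f_inj /eqP f_onto f_adj].
apply/existsP; exists [ffun u => h (f u)]; apply/and3P; split.
- apply/injectiveP => u w; rewrite !ffunE => /h_inj; exact: (injectiveP _ f_inj).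
- apply/eqP; rewrite /= -[p1]f_onto -imset_comp; apply: eq_imset => u; by rewrite ffunE.
- apply/forallP => u; apply/forallP => w; rewrite !ffunE /=.
  have -> : [set h (f u); h (f w)] = h @: [set f u; f w] by rewrite imsetU1 imset_set1.
  rewrite (mem_imset _ _ (imset_inj h_inj)).
  by move/forallP: f_adj => /(_ u) /forallP /(_ w).
Qed.

Lemma copy_image_onto p : p \in copies H G -> (forall a, a \in p.1 -> a \in codom h) ->
  exists2 p', p' \in copies H G' & copy_image p' = p.
Proof.
case: p => p1 p2; rewrite /copies !inE /= => /andP [sub iso] p1_codom.
have edgeP e : e \in p2 -> exists a, exists b,
    [/\ h a \in p1, h b \in p1, adj a b & e = h @: [set a; b]].
  move=> e_in; move/forall_inP: sub => /(_ e e_in).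
  case/existsP => a0 /existsP [b0 /and4P [a_in b_in ab /eqP ->]].
  have [a a0E] := codomP (p1_codom a0 a_in); have [b b0E] := codomP (p1_codom b0 b_in).
  by exists a, b; rewrite -h_adj imsetU1 imset_set1 -a0E -b0E.
exists (h @^-1: p1, [set e : {set vtx G'} | h @: e \in p2]); last first.
  congr pair; apply/setP.
    move=> a; apply/imsetP/idP => [[a' ]|a_in]; first by rewrite inE => ? ->.
    by have [a' ah] := codomP (p1_codom a a_in); exists a'; rewrite // inE -ah.
  move=> e; apply/imsetP/idP => [[e' ]|e_in]; first by rewrite inE => ? ->.
  by case: (edgeP e e_in) => a [b [_ _ _ eE]]; exists [set a; b]; rewrite // inE -eE.
rewrite inE; apply/andP; split.
  apply/forall_inP => e; rewrite inE => /edgeP [a [b [a_in b_in ab ee]]].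
  apply/existsP; exists a; apply/existsP; exists b.
  by rewrite !inE a_in b_in ab (imset_inj h_inj ee) eqxx.
case/existsP: iso => f /and3P [f_inj /eqP /= f_onto f_adj].
have f_codom u : f u \in codom h by apply: p1_codom; rewrite -f_onto imset_f.
pose g := [ffun u => iinv (f_codom u)].
have hg u : h (g u) = f u by rewrite ffunE f_iinv.
apply/existsP; exists g; apply/and3P; split.
- by apply/injectiveP => u w guw; apply: (injectiveP _ f_inj); rewrite -!hg guw.
- apply/eqP/setP => a; rewrite inE; apply/imsetP/idP => [[u _ ->]|].
    by rewrite hg -f_onto imset_f.
  by rewrite -f_onto => /imsetP [u _ fu]; exists u => //; apply: h_inj; rewrite hg.
- apply/forallP => u; apply/forallP => w; rewrite inE imsetU1 imset_set1 !hg.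
  by move/forallP: f_adj => /(_ u) /forallP /(_ w).
Qed.

Lemma Ncount_delete_vertex (v : vtx G) :
  (forall u, h u != v) -> #|vtx G'|.+1 = #|vtx G| ->
  Ncount H G = Ncount H G' + Ncount_at H v.
Proof.
move=> h_neq card_G.
have codom_h a : a != v -> a \in codom h.
  have im_h : h @: setT = [set~ v].
    apply/eqP; rewrite eqEcard cardsC1 card_imset // cardsT -card_G leqnn andbT.
    by apply/subsetP => _ /imsetP [u _ ->]; rewrite !inE h_neq.
  move=> av; have : a \in [set~ v] by rewrite in_setC1.
  by rewrite -im_h => /imsetP [u _ ->]; apply: codom_f.
pose at_v := [set p : {set vtx G} * {set {set vtx G}} | v \in p.1].
rewrite /Ncount /Ncount_at -(cardsID at_v (copies H G)) addnC; congr addn.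
  rewrite -(card_imset (copies H G') copy_image_inj); apply: eq_card => p.
  rewrite in_setD [p \in at_v]inE; apply/andP/imsetP => [[v_notin p_in] | [p' p'_in ->]].
    case: (copy_image_onto p_in) => [a a_in|p' p'_in <-]; last by exists p'.
    by apply: codom_h; apply: contraNneq v_notin => <-.
  split; last exact: copy_image_copies.
  by apply/imsetP => -[u _ /eqP]; rewrite eq_sym (negbTE (h_neq u)).
by apply: eq_card => p; rewrite !inE.
Qed.

Lemma clique_free_induced k : clique_free k G -> clique_free k G'.
Proof.
apply: contra => /existsP [f /andP [f_inj f_clique]].
apply/existsP; exists [ffun i => h (f i)]; apply/andP; split.
  apply/injectiveP => i j; rewrite !ffunE => /h_inj; exact: (injectiveP _ f_inj).
apply/forallP => i; apply/forallP => j; rewrite !ffunE h_adj.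
by move/forallP: f_clique => /(_ i) /forallP /(_ j).
Qed.

End InducedEmbedding.

Definition del_adj (G : sgraph) (v : vtx G) : rel {u : vtx G | u != v} :=
  fun a b => adj (val a) (val b).

Lemma del_adj_sym (G : sgraph) (v : vtx G) : symmetric (@del_adj G v).
Proof. by move=> a b; apply: adj_sym. Qed.

Lemma del_adj_irr (G : sgraph) (v : vtx G) : irreflexive (@del_adj G v).
Proof. by move=> a; apply: adj_irr. Qed.

Definition del_vertex (G : sgraph) (v : vtx G) : sgraph :=
  SGraph (@del_adj_sym G v) (@del_adj_irr G v).

Lemma card_del_vertex (G : sgraph) (v : vtx G) : #|vtx (del_vertex v)|.+1 = #|vtx G|.
Proof.
rewrite /= card_sig [in RHS](cardD1 v) inE add1n; congr _.+1.
by apply: eq_card => u; rewrite !inE andbT.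
Qed.

Lemma Ncount_le_turan_add_Ncount_at (H G : sgraph) (w r n : nat) (v : vtx G) :
  turan_good H w -> w <= r -> #|vtx G| = n.+2 -> clique_free r.+1 G ->
  Ncount H G <= Ncount H (turan r n.+1) + Ncount_at H v.
Proof.
move=> good wr card_G G_free.
have val_adj : forall a b, @adj G (val a) (val b) = @adj (del_vertex v) a b by [].
rewrite (@Ncount_delete_vertex H G (del_vertex v) val val_inj val_adj v (fun u => valP u));
  last exact: card_del_vertex.
rewrite leq_add2r; apply: (good r wr n.+1 (ltn0Sn n)).
- by apply/eqP; rewrite -eqSS card_del_vertex card_G.
- exact: (@clique_free_induced G (del_vertex v) val val_inj val_adj).
Qed.

Section ResidueSwap.

Variables (r : nat) (r_gt0 : 0 < r).

Definition residue (k : nat) : 'I_r := Ordinal (ltn_pmod k r_gt0).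

Variables (c d : 'I_r).

(* Vertex k of a Turán graph sits in block k %/ r at residue k %% r, i.e. in
   part k %% r; swap_parts exchanges the parts c and d inside every block. *)
Definition swap_parts (k : nat) : nat := k %/ r * r + tperm c d (residue k).

Lemma swap_parts_div k : swap_parts k %/ r = k %/ r.
Proof. by rewrite /swap_parts divnMDl // (divn_small (ltn_ord _)) addn0. Qed.

Lemma residue_swap_parts k : residue (swap_parts k) = tperm c d (residue k).
Proof. by apply: val_inj; rewrite /= /swap_parts modnMDl modn_small. Qed.

Lemma swap_partsK : involutive swap_parts.
Proof.
move=> k; rewrite {1}/swap_parts swap_parts_div residue_swap_parts tpermK.
by rewrite [RHS](divn_eq k r).
Qed.

Lemma swap_parts_le n k : c <= n %% r -> d <= n %% r -> k <= n -> swap_parts k <= n.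
Proof.
move=> cn dn kn; rewrite [leqRHS](divn_eq n r) /swap_parts.
have [kn_div | kn_div] := eqVneq (k %/ r) (n %/ r).
  rewrite kn_div leq_add2l; case: tpermP => // _ _ /=.
  by move: kn; rewrite {1}(divn_eq k r) {1}(divn_eq n r) kn_div leq_add2l.
have lt_div : k %/ r < n %/ r by rewrite ltn_neqAle kn_div leq_div2r.
apply: leq_trans (leq_addr (n %% r) _); apply: leq_trans (_ : (k %/ r).+1 * r <= _).
  by rewrite mulSnr leq_add2l ltnW.
by rewrite leq_mul2r lt_div orbT.
Qed.

End ResidueSwap.

Lemma turan_adj_residue_map (r : nat) (r_gt0 : 0 < r) (m n : nat)
    (f : 'I_m -> 'I_n) (s : {perm 'I_r}) :
  (forall u, residue r_gt0 (f u) = s (residue r_gt0 u)) ->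
  forall u w, turan_adj r (f u) (f w) = turan_adj r u w.
Proof.
move=> fs u w; congr negb.
by rewrite -[_ == _]/(residue r_gt0 (f u) == residue r_gt0 (f w)) !fs (inj_eq perm_inj).
Qed.

Lemma turan_clique_free (r n : nat) : 0 < r -> clique_free r.+1 (turan r n).
Proof.
move=> r_gt0; apply/negP => /existsP [f /andP [_ f_clique]].
have : injective (fun i => residue r_gt0 (f i)).
  move=> i j /(congr1 val) /= ij; apply/eqP; apply/negPn/negP => i_neq_j.
  by move/forallP: f_clique => /(_ i) /forallP /(_ j); rewrite i_neq_j /= /turan_adj ij eqxx.
by move/leq_card; rewrite !card_ord ltnn.
Qed.

Lemma card_turan_part_lt (r n : nat) (x : 'I_n.+1) : 0 < r ->
  n %% r < x %% r -> #|turan_part r x| < #|turan_part r (@ord_max n)|.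
Proof.
move=> r_gt0 lt_mod.
pose s := swap_parts r_gt0 (residue r_gt0 x) (residue r_gt0 n).
have s_mod u : u %% r = x %% r -> s u %% r = n %% r.
  move=> u_mod; rewrite -[_ %% r]/(nat_of_ord (residue r_gt0 (s u))) residue_swap_parts.
  have -> : residue r_gt0 u = residue r_gt0 x by apply: val_inj.
  by rewrite tpermL.
have s_lt u : u %% r = x %% r -> s u < u.
  move=> u_mod; rewrite (divn_eq (s u) r) swap_parts_div [ltnRHS](divn_eq u r).
  by rewrite ltn_add2l s_mod // u_mod.
pose g (u : 'I_n.+1) : 'I_n.+1 := inord (s u).
have gE (u : 'I_n.+1) : u %% r = x %% r -> (g u : nat) = s u.
  by move=> u_mod; rewrite inordK // (ltn_trans (s_lt u u_mod)).
have g_inj : {in turan_part r x &, injective g}.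
  move=> u w; rewrite !inE => /eqP u_mod /eqP w_mod /(congr1 (@nat_of_ord _)).
  by rewrite gE // gE // => /(inv_inj (swap_partsK _ _ _)) /val_inj.
have g_sub : g @: turan_part r x \subset turan_part r ord_max :\ ord_max.
  apply/subsetP => a /imsetP [u]; rewrite inE => /eqP u_mod ->.
  rewrite !inE -val_eqE /= gE // s_mod // eqxx andbT neq_ltn.
  by rewrite (leq_trans (s_lt u u_mod)) // -ltnS.
rewrite -(card_in_imset g_inj); apply: (leq_ltn_trans (subset_leq_card g_sub)).
by rewrite [ltnRHS](cardsD1 ord_max) inE eqxx.
Qed.

Section TuranMinusLargestPart.

Variables (r n : nat) (r_gt0 : 0 < r) (x : 'I_n.+1).
Hypothesis x_mod_le : x %% r <= n %% r.

Let c := residue r_gt0 x.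
Let d := residue r_gt0 n.

Lemma swap_parts_ord_proof (u : 'I_n.+1) : swap_parts r_gt0 c d u < n.+1.
Proof. by apply: swap_parts_le; rewrite //= -ltnS. Qed.

Definition swap_parts_ord (u : 'I_n.+1) : 'I_n.+1 := Ordinal (swap_parts_ord_proof u).

Lemma swap_parts_ordK : involutive swap_parts_ord.
Proof. by move=> u; apply: val_inj; rewrite /= swap_partsK. Qed.

Let y : 'I_n.+1 := swap_parts_ord x.

(* Embeds T_r(n) into T_r(n+1) - x.  Let y be the vertex of x's block in the part
   of n: transposing y and n makes the image avoid y, and swapping the parts of
   n and x then sends y to x. *)
Definition turan_skip (u : 'I_n) : 'I_n.+1 :=
  swap_parts_ord (tperm y ord_max (widen_ord (leqnSn n) u)).

Lemma turan_skip_inj : injective turan_skip.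
Proof.
move=> u w /(inv_inj swap_parts_ordK) /perm_inj /(congr1 val) /= uw.
exact: val_inj.
Qed.

Lemma turan_skip_neq u : turan_skip u != x.
Proof.
rewrite -[X in _ != X](swap_parts_ordK x) (inj_eq (inv_inj swap_parts_ordK)).
rewrite -[X in _ != X](tpermR y ord_max) (inj_eq perm_inj); apply/eqP => /(congr1 val) /=.
by move/eqP; rewrite ltn_eqF.
Qed.

Lemma residue_turan_skip u :
  residue r_gt0 (turan_skip u) = tperm c d (residue r_gt0 u).
Proof.
have residue_y : residue r_gt0 y = d by rewrite residue_swap_parts tpermL.
rewrite /turan_skip residue_swap_parts; congr (tperm c d _).
rewrite -[residue _ u]/(residue r_gt0 (widen_ord (leqnSn n) u)).
by case: tpermP => [->|->|] //; rewrite residue_y.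
Qed.

End TuranMinusLargestPart.

Lemma Ncount_turan_delete_largest (H : sgraph) (r n : nat) (x : 'I_n.+1) : 0 < r ->
  (forall u : 'I_n.+1, #|turan_part r u| <= #|turan_part r x|) ->
  Ncount H (turan r n.+1) = Ncount H (turan r n) + Ncount_at H (x : vtx (turan r n.+1)).
Proof.
move=> r_gt0 x_largest.
have x_mod_le : x %% r <= n %% r.
  rewrite leqNgt; apply: contraTN (x_largest ord_max).
  by move=> /(card_turan_part_lt r_gt0); rewrite -ltnNge.
apply: (@Ncount_delete_vertex H (turan r n.+1) (turan r n) (turan_skip r_gt0 x_mod_le)).
- exact: turan_skip_inj.
- exact: (turan_adj_residue_map (residue_turan_skip r_gt0 x_mod_le)).
- exact: turan_skip_neq.
- by rewrite /= !card_ord.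
Qed.

Theorem mainTheorem13 (H : sgraph) (r n : nat)
  (hr : exists w, is_omega0 H w /\ w <= r) (hn : 0 < n)
  (x v : 'I_n)
  (hx : forall u : 'I_n, #|turan_part r u| <= #|turan_part r x|) :
  @Ncount_at H (turan r n) x <= @Ncount_at H (turan r n) v /\
  ((Ncount_at H (x : vtx (turan r n)))%:Z =
     (Ncount H (turan r n))%:Z - (Ncount H (turan r n.-1))%:Z)%R.
Proof.
case: n hn x v hx => // n _ x v x_largest.
have [w [[w_gt0 w_good _] wr]] := hr.
have r_gt0 : 0 < r := leq_trans w_gt0 wr.
have N_x := Ncount_turan_delete_largest H r_gt0 x_largest.
split; last by rewrite N_x PoszD GRing.addrAC GRing.subrr GRing.add0r.
case: n x v x_largest N_x => [|n] x v _ N_x; first by rewrite (ord1 x) (ord1 v).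
rewrite -(leq_add2l (Ncount H (turan r n.+1))) -N_x.
apply: Ncount_le_turan_add_Ncount_at w_good wr _ (turan_clique_free _ r_gt0).
by rewrite card_ord.
Qed.
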